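(* Let $n\ge 2$ be an integer and let $Q_{4n}=\langle x,y : x^{2n}=1,\ x^n=y^2,\ yx=x^{-1}y\rangle$ be the generalized quaternion group of order $4n$. Let $\Gamma_{Q_{4n}}$ be its non-commuting graph. Then the spectrum of the distance matrix $D(\Gamma_{Q_{4n}})$ (eigenvalues counted with multiplicity, multiplicities being added if two of the listed values coincide) consists of: (a) $-2$ with multiplicity $3n-3$; (b) $0$ with multiplicity $n-1$; (c) $3(n-1)+\sqrt{5n^2-10n+9}$ and $3(n-1)-\sqrt{5n^2-10n+9}$, each with multiplicity $1$.
   Context: For a finite non-abelian group $G$ with centre $Z(G)$, the non-commuting graph $\Gamma_G$ is the simple undirected graph with vertex set $G\setminus Z(G)$, in which two distinct vertices $u,v$ are adjacent if and only if $uv\ne vu$. For a connected graph $H$, $d_{uv}$ denotes the length of a shortest path between vertices $u$ and $v$, and the distance matrix $D(H)$ is the matrix whose $(u,v)$-entry is $d_{uv}$. *)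

From mathcomp Require Import all_boot all_order all_algebra all_fingroup all_solvable all_field.
Set Implicit Arguments. Unset Strict Implicit. Unset Printing Implicit Defensive.
Import GRing.Theory Num.Theory.
From mathcomp Require Import center.
Local Open Scope group_scope.

Section NonCommutingGraph.
Variable gT : finGroupType.
Variable G : {set gT}.

Definition nc_vertices : {set gT} := G :\: (center G).

(* Adjacency: distinct vertices u, v with uv <> vu (u <> v is implied). *)
Definition nc_adj (u v : gT) : bool :=
  [&& u \in nc_vertices, v \in nc_vertices & (u * v != v * u)%g].

Fixpoint nc_ball (k : nat) (u : gT) : {set gT} :=
  match k with
  | 0 => [set u]
  | k.+1 => nc_ball k u :|: [set w | [exists v in nc_ball k u, nc_adj v w]]
  end.

(* Graph distance d_{uv}: least k with v reachable from u in <= k steps.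
   (Every finite distance is < #|gT|, so searching k in [0, #|gT|] suffices.) *)
Definition nc_dist (u v : gT) : nat :=
  find (fun k => v \in nc_ball k u) (iota 0 #|gT|.+1).

Definition nc_distmx : 'M[algC]_#|nc_vertices| :=
  \matrix_(i, j) (nc_dist (enum_val i) (enum_val j))%:R%R.

End NonCommutingGraph.

(* The non-central elements of Q_4n split into n + 1 classes of
   pairwise commuting elements: the 2n - 2 non-central powers of x, and the n
   cosets Z x^k y (k < n) of the centre Z = <x^n>, each of size 2; elements of
   different classes never commute.  So the non-commuting graph is complete
   multipartite: vertices in the same class are at distance 2, vertices in
   different classes at distance 1.  With P the vertex-by-class incidence
   matrix and J the all-ones matrix, D + 2 = P (1 + J) P^T, and Sylvester's
   identity reduces det ((s - 2) - D) to a determinant of size n + 1, namely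
   of a diagonal matrix minus a rank-one matrix.  Both sides of the claimed
   identity are polynomials, so it is enough to compare them at all large
   natural numbers. *)

From mathcomp Require Import all_boot all_order all_algebra all_fingroup all_solvable all_field.
Import GRing.Theory Num.Theory.
From mathcomp Require Import center ring zify.
Set Implicit Arguments.
Unset Strict Implicit.
Unset Printing Implicit Defensive.
Local Open Scope ring_scope.

Lemma det1B_mulmxC (R : comNzRingType) m k (A : 'M[R]_(m, k)) (B : 'M_(k, m)) :
  \det (1%:M - A *m B) = \det (1%:M - B *m A).
Proof.
have eL : block_mx 1%:M A B 1%:M =
    block_mx 1%:M 0 B 1%:M *m block_mx 1%:M A 0 (1%:M - B *m A).
  by rewrite mulmx_block !(mul1mx, mul0mx, mulmx0, mulmx1, addr0, add0r) addrC subrK.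
have eU : block_mx 1%:M A B 1%:M =
    block_mx 1%:M A 0 1%:M *m block_mx (1%:M - A *m B) 0 B 1%:M.
  by rewrite mulmx_block !(mul1mx, mul0mx, mulmx0, mulmx1, addr0, add0r) subrK.
have := congr1 determinant eL; rewrite eU !det_mulmx !det_lblock !det_ublock.
by rewrite !det1 !mul1r !mulr1.
Qed.

Lemma det_scalarB_mulmxC (F : fieldType) m k (A : 'M[F]_(m, k)) (B : 'M_(k, m)) (s : F) :
  s != 0 -> \det (s%:M - A *m B) * s ^+ k = \det (s%:M - B *m A) * s ^+ m.
Proof.
move=> s_neq0.
have scale_out p (C : 'M[F]_p) : s%:M - C = s *: (1%:M - s^-1 *: C).
  by rewrite scalerBr scalerA divff // scale1r scalemx1.
by rewrite !scale_out !detZ scalemxAl det1B_mulmxC -scalemxAr; ring.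
Qed.

Lemma det_diagB_rank1 (F : fieldType) k (d : 'rV[F]_k) (u : 'cV_k) (v : 'rV_k) :
  (forall p, d 0 p != 0) ->
  \det (diag_mx d - u *m v) = \prod_p d 0 p * (1 - \sum_p v 0 p * u p 0 / d 0 p).
Proof.
move=> d_neq0; set e := \row_p (d 0 p)^-1.
have -> : diag_mx d - u *m v = diag_mx d *m (1%:M - (diag_mx e *m u) *m v).
  rewrite mulmxBr mulmx1 !mulmxA mulmx_diag.
  have -> : \row_p (d 0 p * e 0 p) = const_mx 1.
    by apply/rowP => p; rewrite !mxE divff.
  by rewrite diag_const_mx mul_scalar_mx scale1r.
rewrite det_mulmx det_diag det1B_mulmxC det_mx11 !mxE; congr (_ * (_ - _)).
by apply: eq_bigr => p _; rewrite mul_diag_mx !mxE mulrCA mulrC.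
Qed.

Lemma horner_char_poly (R : comNzRingType) N (A : 'M[R]_N) (t : R) :
  (char_poly A).[t] = \det (t%:M - A).
Proof.
rewrite /char_poly -horner_evalE -det_map_mx; congr (\det _).
apply/matrixP => i j; rewrite !mxE /= horner_evalE !hornerE.
by case: (i == j); rewrite /= ?mulr1n ?mulr0n ?hornerE.
Qed.

Lemma poly_eq_large_nat (R : numDomainType) (p q : {poly R}) (m0 : nat) :
  (forall m, (m0 <= m)%N -> p.[m%:R] = q.[m%:R]) -> p = q.
Proof.
move=> eq_pq; apply/eqP; rewrite -subr_eq0; apply/eqP.
apply: (@roots_geq_poly_eq0 _ _ [seq (m0 + k)%:R | k <- iota 0 (size (p - q))]).
- by apply/allP => r /mapP[k _ ->]; rewrite rootE !hornerE eq_pq ?leq_addr // subrr.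
- by rewrite map_inj_uniq ?iota_uniq // => a b /eqP; rewrite eqr_nat eqn_add2l => /eqP.
- by rewrite size_map size_iota.
Qed.

Section CompleteMultipartite.
Variables (F : fieldType) (N k : nat) (c : 'I_N -> 'I_k).

Definition class_size (p : 'I_k) : nat := #|[set i | c i == p]|.

Definition class_mx : 'M[F]_(N, k) := \matrix_(i, p) (c i == p)%:R.

Definition multipartite_distmx : 'M[F]_N :=
  \matrix_(i, j) (if i == j then 0 else if c i == c j then 2 else 1).

Lemma class_mx_mul_const1 m : class_mx *m const_mx 1 = const_mx 1 :> 'M_(N, m).
Proof.
apply/matrixP => i j; rewrite !mxE (bigD1 (c i)) //= big1 => [|p /negbTE cip].
  by rewrite !mxE eqxx mulr1 addr0.
by rewrite !mxE eq_sym cip mul0r.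
Qed.

Lemma class_mx_gram : class_mx^T *m class_mx = diag_mx (\row_p (class_size p)%:R).
Proof.
apply/matrixP => p q; rewrite !mxE.
under eq_bigr do rewrite !mxE -natrM mulnb.
rewrite -natr_sum; case: eqVneq => [<-|pq].
  rewrite mulr1n /class_size -sum1_card; congr _%:R; rewrite [RHS]big_mkcond.
  by apply: eq_bigr => i _; rewrite inE andbb; case: (c i == p).
by rewrite mulr0n big1 // => i _; case: eqP => // ->; rewrite (negbTE pq).
Qed.

Lemma multipartite_distmx_factor :
  multipartite_distmx + 2%:M = class_mx *m (1%:M + const_mx 1) *m class_mx^T.
Proof.
rewrite mulmxDr mulmx1 mulmxDl class_mx_mul_const1.
have -> : const_mx 1 *m class_mx^T = const_mx 1 :> 'M[F]_N.
  by rewrite -[const_mx 1]trmx_const -trmx_mul class_mx_mul_const1 trmx_const.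
apply/matrixP => i j; rewrite !mxE.
rewrite (bigD1 (c i)) //= big1 => [|p /negbTE cip]; last by rewrite !mxE eq_sym cip mul0r.
rewrite !mxE eqxx mul1r addr0 eq_sym.
case: eqVneq => [->|_]; first by rewrite eqxx add0r.
by rewrite addr0 eq_sym; case: (c j == c i); rewrite ?add0r.
Qed.

Lemma det_multipartite_distmx (s : F) :
  s != 0 -> (forall p, s != (class_size p)%:R) ->
  \det ((s - 2)%:M - multipartite_distmx) * s ^+ k =
  s ^+ N * (\prod_p (s - (class_size p)%:R) *
            (1 - \sum_p (class_size p)%:R / (s - (class_size p)%:R))).
Proof.
move=> s_neq0 s_neq_size; set sz := \row_p (class_size p)%:R : 'rV[F]_k.
have -> : (s - 2)%:M - multipartite_distmx =
    s%:M - class_mx *m ((1%:M + const_mx 1) *m class_mx^T).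
  by rewrite mulmxA -multipartite_distmx_factor raddfB /= opprD addrA addrAC.
rewrite det_scalarB_mulmxC // -mulmxA class_mx_gram mulmxDl mul1mx.
have -> : (const_mx 1 : 'M[F]_k) = const_mx 1 *m (const_mx 1 : 'rV_k).
  by apply/matrixP => p q; rewrite !mxE big_ord1 !mxE mulr1.
rewrite -mulmxA mul_mx_diag.
have -> : \matrix_(i, j) ((const_mx 1 : 'rV[F]_k) i j * sz 0 j) = sz.
  by apply/rowP => p; rewrite !mxE mul1r.
have -> : s%:M - (diag_mx sz + const_mx 1 *m sz) =
    diag_mx (\row_p (s - sz 0 p)) - const_mx 1 *m sz.
  by rewrite opprD addrA; congr (_ - _); apply/matrixP => p q; rewrite !mxE mulrnBl.
rewrite det_diagB_rank1 => [|p]; last by rewrite !mxE subr_eq0.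
rewrite mulrC; congr (_ * (_ * (1 - _))).
- by apply: eq_bigr => p _; rewrite !mxE.
- by apply: eq_bigr => p _; rewrite !mxE mulr1.
Qed.

End CompleteMultipartite.

Section NonCommutingDistance.
Variables (gT : finGroupType) (G : {set gT}).
Local Open Scope group_scope.

Lemma nc_ball_mono j k u : (j <= k)%N -> nc_ball G j u \subset nc_ball G k u.
Proof.
elim: k => [|k IHk]; first by rewrite leqn0 => /eqP->.
rewrite leq_eqVlt ltnS => /predU1P[->//|/IHk sub_jk].
exact: subset_trans sub_jk (subsetUl _ _).
Qed.

Lemma nc_dist_eqS u v k : (k < #|gT|)%N ->
  v \in nc_ball G k.+1 u -> v \notin nc_ball G k u -> nc_dist G u v = k.+1.
Proof.
move=> lt_k v_in v_notin.
rewrite /nc_dist (_ : #|gT|.+1 = k.+1 + (#|gT| - k.+1).+1)%N; last by lia.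
rewrite iotaD find_cat size_iota.
have -> : has (fun j => v \in nc_ball G j u) (iota 0 k.+1) = false.
  apply/hasP => -[j]; rewrite mem_iota add0n ltnS => /andP[_ le_jk] v_in_j.
  by move/negP: v_notin; apply; apply: subsetP v_in_j; apply: nc_ball_mono.
by rewrite /= v_in addn0.
Qed.

Lemma nc_dist_refl u : nc_dist G u u = 0%N.
Proof. by rewrite /nc_dist /= inE eqxx. Qed.

Lemma nc_ball1 u : nc_ball G 1 u = u |: [set w | nc_adj G u w].
Proof.
apply/setP => w; rewrite !inE; congr (_ || _).
by apply/existsP/idP => [[v /andP[/set1P-> //]]|adj_uw]; exists u; rewrite inE eqxx.
Qed.

Lemma nc_dist_adj u v : u \in nc_vertices G -> v \in nc_vertices G ->
  u * v != v * u -> nc_dist G u v = 1%N.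
Proof.
move=> u_in v_in uv_ncomm; apply: nc_dist_eqS; first by apply/card_gt0P; exists u.
  by rewrite nc_ball1 !inE /nc_adj u_in v_in uv_ncomm orbT.
by rewrite inE; apply: contra uv_ncomm => /eqP->.
Qed.

Lemma nc_dist_two u v w :
  [/\ u \in nc_vertices G, v \in nc_vertices G & w \in nc_vertices G] -> u != v ->
  u * v = v * u -> u * w != w * u -> w * v != v * w -> nc_dist G u v = 2%N.
Proof.
case=> u_in v_in w_in neq_uv uv_comm uw_ncomm wv_ncomm.
apply: nc_dist_eqS; first by apply/card_gt1P; exists u, v.
  have w_in1 : w \in nc_ball G 1 u by rewrite nc_ball1 !inE /nc_adj u_in w_in uw_ncomm orbT.
  apply/setUP; right; rewrite inE; apply/existsP; exists w; apply/andP; split=> //.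
  by rewrite /nc_adj w_in v_in wv_ncomm.
by rewrite nc_ball1 !inE eq_sym (negbTE neq_uv) /nc_adj uv_comm eqxx !andbF.
Qed.

End NonCommutingDistance.

Lemma card_preim_enum_val (T : finType) (A : {pred T}) (P : pred T) :
  #|[set i : 'I_#|A| | P (enum_val i)]| = #|[set u in A | P u]|.
Proof.
rewrite -(card_imset _ enum_val_inj); apply: eq_card => u; rewrite inE.
apply/imsetP/andP => [[i]|[u_A Pu]]; first by rewrite inE => Pi ->; rewrite enum_valP.
by exists (enum_rank_in u_A u); rewrite ?inE enum_rankK_in.
Qed.

Section GeneralizedQuaternion.
Variables (n : nat) (gT : finGroupType) (x y : gT).
Hypotheses (n_ge2 : (2 <= n)%N) (x_order : (x ^+ (2 * n) = 1)%g)
  (xn_y2 : (x ^+ n = y ^+ 2)%g) (yx : (y * x = x^-1 * y)%g)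
  (card_quat : #|<<[set x; y]>>%g| = (4 * n)%N).
Local Open Scope group_scope.

Local Notation H := <<[set x; y]>>.
Local Notation V := (nc_vertices H).

Lemma n_gt0 : (0 < n)%N. Proof. exact: leq_trans n_ge2. Qed.

Lemma y_conj_cycle v : v \in <[x]> -> y * v = v^-1 * y.
Proof.
case/cycleP => i ->; elim: i => [|i IHi]; first by rewrite expg0 invg1 mulg1 mul1g.
by rewrite expgSr mulgA IHi -mulgA yx mulgA -invMg -expgS -expgSr.
Qed.

Lemma quat_set_group : group_set (<[x]> :|: <[x]> :* y).
Proof.
apply/group_setP; split; first by rewrite !inE group1.
move=> u v; rewrite !inE !mem_rcoset => /orP[] u_in /orP[] v_in.
- by rewrite groupM.
- by apply/orP; right; rewrite -mulgA groupM.
- apply/orP; right.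
  have -> : u * v * y^-1 = (u * y^-1) * (y * v * y^-1) by rewrite !mulgA mulgKV.
  by rewrite y_conj_cycle // mulgK groupM ?groupV.
- apply/orP; left.
  have -> : u * v = (u * y^-1) * (y * (v * y^-1) * y^-1) * y ^+ 2.
    by rewrite expgS expg1 !mulgA !mulgKV.
  by rewrite -xn_y2 y_conj_cycle // mulgK groupM ?mem_cycle // groupM // groupV.
Qed.

Lemma quat_sub_cosets : H \subset <[x]> :|: <[x]> :* y.
Proof.
rewrite -[<[x]> :|: _]/(gval (Group quat_set_group)) gen_subG.
apply/subsetP => u; rewrite !inE => /orP[]/eqP->; first by rewrite cycle_id.
by rewrite mem_rcoset mulgV group1 orbT.
Qed.

Lemma order_x : #[x] = (2 * n)%N.
Proof.
have le_ord : (#[x] <= 2 * n)%N by apply: dvdn_leq; [lia | rewrite order_dvdn x_order].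
have := subset_leq_card quat_sub_cosets; rewrite card_quat.
by rewrite cardsU card_rcoset -orderE; lia.
Qed.

Lemma quatE : H = <[x]> :|: <[x]> :* y.
Proof.
apply/eqP; rewrite eqEcard quat_sub_cosets card_quat.
by rewrite cardsU card_rcoset -orderE order_x; lia.
Qed.

Lemma y_notin_cycle : y \notin <[x]>.
Proof.
apply/negP => y_in; have := card_quat; rewrite quatE rcoset_id // setUid -orderE order_x; lia.
Qed.

Lemma expx_y_notin_cycle i : x ^+ i * y \notin <[x]>.
Proof. by rewrite groupMl ?mem_cycle ?y_notin_cycle. Qed.

Lemma quat_memP u : u \in H -> (exists i, u = x ^+ i) \/ (exists i, u = x ^+ i * y).
Proof.
rewrite quatE inE mem_rcoset => /orP[/cycleP[i ->]|/cycleP[i e]]; first by left; exists i.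
by right; exists i; rewrite -e mulgKV.
Qed.

Lemma expx_in i : x ^+ i \in H.
Proof. by rewrite quatE inE mem_cycle. Qed.

Lemma expx_y_in i : x ^+ i * y \in H.
Proof. by rewrite quatE !inE mem_rcoset mulgK mem_cycle orbT. Qed.

Lemma expx_eq_inv i : (x ^+ i == (x ^+ i)^-1) = (n %| i)%N.
Proof.
rewrite eq_sym eq_invg_mul -expgD -order_dvdn order_x addnn -mul2n.
by rewrite dvdn_pmul2l.
Qed.

Lemma expx_double_eq i j : (x ^+ (i + i) == x ^+ (j + j)) = (i == j %[mod n])%N.
Proof.
by rewrite eq_expg_mod_order order_x !addnn -!mul2n -!muln_modr eqn_pmul2l.
Qed.

Lemma in_quat_center u : (u \in 'Z(H)) = [&& u \in H, u * x == x * u & u * y == y * u].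
Proof.
rewrite /center inE cent_gen centU !cent_set1 inE; congr (_ && (_ && _)); exact/cent1P/eqP.
Qed.

Lemma expx_centerE i : (x ^+ i \in 'Z(H)) = (n %| i)%N.
Proof.
rewrite in_quat_center expx_in (commuteX2 i 1 (commute_refl x)) eqxx /=.
by rewrite y_conj_cycle ?mem_cycle // (inj_eq (mulIg _)) expx_eq_inv.
Qed.

Lemma expx_y_notin_quat_center i : x ^+ i * y \notin 'Z(H).
Proof.
rewrite in_quat_center expx_y_in /=; apply/negP => /andP[/eqP comm_x _].
move: comm_x; rewrite -mulgA yx !mulgA -(commuteX2 i 1 (commute_refl x)) expg1.
move/mulIg/mulgI/eqP; rewrite eq_sym -[x]expg1 expx_eq_inv dvdn1; lia.
Qed.

Lemma quat_centerE : 'Z(H) = <[x ^+ n]>.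
Proof.
apply/eqP; rewrite eqEsubset cycle_subG expx_centerE dvdnn andbT.
apply/subsetP => u u_in.
have [[i eu]|[i eu]] := quat_memP (subsetP (center_sub H) u u_in); rewrite {}eu in u_in *.
  by move: u_in; rewrite expx_centerE => /dvdnP[q ->]; rewrite mulnC expgM mem_cycle.
by rewrite (negbTE (expx_y_notin_quat_center i)) in u_in.
Qed.

Lemma card_quat_center : #|'Z(H)| = 2%N.
Proof.
by rewrite quat_centerE -orderE orderXdiv order_x ?dvdn_mull // mulnK // n_gt0.
Qed.

Lemma quat_center_sub_cycle : 'Z(H) \subset <[x]>.
Proof. by rewrite quat_centerE cycle_subG mem_cycle. Qed.

Lemma card_quat_vertices : #|V| = (4 * n - 2)%N.
Proof. by rewrite cardsD (setIidPr (center_sub H)) card_quat card_quat_center. Qed.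

Lemma expx_vertexE i : (x ^+ i \in V) = ~~ (n %| i)%N.
Proof. by rewrite inE expx_centerE expx_in andbT. Qed.

Lemma expx_y_vertex i : x ^+ i * y \in V.
Proof. by rewrite inE expx_y_notin_quat_center expx_y_in. Qed.

Lemma commute_expx_expx_y i j :
  (x ^+ i * (x ^+ j * y) == x ^+ j * y * x ^+ i) = (n %| i)%N.
Proof.
rewrite -mulgA y_conj_cycle ?mem_cycle // !mulgA (commuteX2 i j (commute_refl x)).
by rewrite (inj_eq (mulIg _)) (inj_eq (mulgI _)) expx_eq_inv.
Qed.

Lemma commute_expx_y i j :
  (x ^+ i * y * (x ^+ j * y) == x ^+ j * y * (x ^+ i * y)) = (i == j %[mod n])%N.
Proof.
have yy k l : x ^+ k * y * (x ^+ l * y) = x ^+ k * (x ^+ l)^-1 * (y * y).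
  by rewrite mulgA -[x ^+ k * y * x ^+ l]mulgA (y_conj_cycle (mem_cycle x l)) !mulgA.
rewrite !yy (inj_eq (mulIg _)) -(inj_eq (mulIg (x ^+ i * x ^+ j))) -expx_double_eq.
have c : commute (x ^+ i) (x ^+ j) by apply: commuteX2.
by rewrite {1}c !mulgA mulgKV -(mulgA _ _ (x ^+ i)) mulVg mulg1 !expgD.
Qed.

Definition quat_class (u : gT) : 'I_n.+1 :=
  if u \in <[x]> then ord0
  else if [pick k : 'I_n | u * (x ^+ k * y) == x ^+ k * y * u] is Some k then lift ord0 k
  else ord0.

Lemma quat_class_cycle u : u \in <[x]> -> quat_class u = ord0.
Proof. by rewrite /quat_class => ->. Qed.

Lemma quat_class_expx_y i : quat_class (x ^+ i * y) = lift ord0 (Ordinal (ltn_pmod i n_gt0)).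
Proof.
rewrite /quat_class (negbTE (expx_y_notin_cycle i)).
case: pickP => [k | /(_ (Ordinal (ltn_pmod i n_gt0)))]; last first.
  by rewrite commute_expx_y modn_mod eqxx.
rewrite commute_expx_y (modn_small (ltn_ord k)) => /eqP ik.
by congr (lift ord0 _); apply: val_inj.
Qed.

Lemma commute_quat_vertices u v : u \in V -> v \in V ->
  (u * v == v * u) = (quat_class u == quat_class v).
Proof.
move=> u_V v_V.
have [[i eu]|[i eu]] := quat_memP (setDP u_V).1;
  have [[j ev]|[j ev]] := quat_memP (setDP v_V).1; subst u v.
- by rewrite !quat_class_cycle ?mem_cycle // (commuteX2 i j (commute_refl x)) !eqxx.
- rewrite quat_class_cycle ?mem_cycle // quat_class_expx_y commute_expx_expx_y.
  by rewrite (negbTE (neq_lift _ _)); apply/negbTE; rewrite -expx_vertexE.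
- rewrite eq_sym [RHS]eq_sym (quat_class_cycle (mem_cycle x j)) quat_class_expx_y.
  by rewrite commute_expx_expx_y (negbTE (neq_lift _ _)); apply/negbTE; rewrite -expx_vertexE.
- by rewrite !quat_class_expx_y (inj_eq lift_inj) commute_expx_y.
Qed.

Lemma nc_dist_quat u v : u \in V -> v \in V ->
  nc_dist H u v = (if u == v then 0 else if quat_class u == quat_class v then 2 else 1)%N.
Proof.
move=> u_V v_V; have comm_uv := commute_quat_vertices u_V v_V.
have [<-|neq_uv] := eqVneq u v; first exact: nc_dist_refl.
have [same|] := eqVneq (quat_class u) (quat_class v); last first.
  by rewrite -comm_uv => ncomm; apply: nc_dist_adj.
have x_V : x \in V by rewrite -[x]expg1 expx_vertexE dvdn1; lia.
have y_V : y \in V by have := expx_y_vertex 0; rewrite mul1g.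
have class_x : quat_class x = ord0 by rewrite quat_class_cycle ?cycle_id.
have class_y : quat_class y != ord0.
  by have := quat_class_expx_y 0; rewrite mul1g => ->; rewrite eq_sym neq_lift.
have w_sep w : w \in V -> quat_class w != quat_class u -> nc_dist H u v = 2%N.
  move=> w_V neq_w; apply: (@nc_dist_two _ _ u v w) => //.
  - by apply/eqP; rewrite comm_uv same.
  - by rewrite (commute_quat_vertices u_V w_V) eq_sym.
  - by rewrite (commute_quat_vertices w_V v_V) -same.
have [class_u|class_u] := eqVneq (quat_class u) ord0.
  by apply: (w_sep y); rewrite ?class_u.
by apply: (w_sep x); rewrite ?class_x 1?eq_sym.
Qed.

Lemma cycle_sub_quat : <[x]> \subset H.
Proof. by rewrite quatE subsetUl. Qed.

Lemma quat_class0E : [set u in V | quat_class u == ord0] = <[x]> :\: 'Z(H).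
Proof.
apply/setP => u; rewrite inE [RHS]inE.
have [u_x|u_nx] := boolP (u \in <[x]>).
  by rewrite quat_class_cycle // eqxx andbT inE (subsetP cycle_sub_quat).
rewrite andbF; apply/negbTE/andP => -[u_V].
have [[i eu]|[i eu]] := quat_memP (setDP u_V).1; subst u; first by rewrite mem_cycle in u_nx.
by rewrite quat_class_expx_y eq_sym (negbTE (neq_lift _ _)).
Qed.

Lemma quat_class_liftE (k : 'I_n) :
  [set u in V | quat_class u == lift ord0 k] = 'Z(H) :* (x ^+ k * y).
Proof.
apply/setP => u; rewrite inE mem_rcoset quat_centerE.
apply/andP/cycleP => [[u_V /eqP class_u]|[j e]].
  have [[i eu]|[i eu]] := quat_memP (setDP u_V).1; subst u.
    by move: class_u; rewrite quat_class_cycle ?mem_cycle // => /eqP.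
  move: class_u; rewrite quat_class_expx_y => /lift_inj/(congr1 val) /= ik.
  exists (i %/ n)%N; rewrite invMg mulgA mulgK -expgM.
  by rewrite {1}(divn_eq i n) ik expgD mulgK mulnC.
have -> : u = x ^+ (n * j + k) * y by rewrite expgD expgM -e -mulgA mulgKV.
split; first exact: expx_y_vertex.
rewrite quat_class_expx_y; apply/eqP; congr (lift ord0 _); apply: val_inj.
by rewrite /= mulnC modnMDl modn_small.
Qed.

Lemma card_quat_class0 : #|[set u in V | quat_class u == ord0]| = (2 * n - 2)%N.
Proof.
by rewrite quat_class0E cardsD (setIidPr quat_center_sub_cycle) -orderE order_x card_quat_center.
Qed.

Lemma card_quat_class_lift (k : 'I_n) : #|[set u in V | quat_class u == lift ord0 k]| = 2%N.
Proof. by rewrite quat_class_liftE card_rcoset card_quat_center. Qed.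

Local Close Scope group_scope.

Local Notation quat_classes := (fun i : 'I_#|V| => quat_class (enum_val i)).

Lemma quat_class_size0 : class_size quat_classes ord0 = (2 * n - 2)%N.
Proof.
by rewrite /class_size (card_preim_enum_val V (fun u => quat_class u == ord0)) card_quat_class0.
Qed.

Lemma quat_class_size_lift k : class_size quat_classes (lift ord0 k) = 2%N.
Proof.
rewrite /class_size (card_preim_enum_val V (fun u => quat_class u == lift ord0 k)).
exact: card_quat_class_lift.
Qed.

Lemma nc_distmx_quat : nc_distmx H = multipartite_distmx algC quat_classes.
Proof.
apply/matrixP => i j; rewrite !mxE nc_dist_quat ?enum_valP // (inj_eq enum_val_inj).
by case: ifP => // _; case: ifP.
Qed.

Lemma det_nc_distmx_quat (t : algC) :
  t != 0 -> t + 2 != 0 -> t + 2 != (2 * n - 2)%:R ->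
  \det (t%:M - nc_distmx H) =
  (t + 2) ^+ (3 * n - 3) * t ^+ (n - 1) *
  (t ^+ 2 - (6 * n%:R - 6) * t + (4 * n%:R ^+ 2 - 8 * n%:R)).
Proof.
move=> t_neq0 s_neq0 s_neq_2n2; set s := t + 2.
have s_neq_size p : s != (class_size quat_classes p)%:R.
  case: (unliftP ord0 p) => [k|] ->; rewrite ?quat_class_size0 ?quat_class_size_lift //.
  by rewrite -subr_eq0 addrK.
have prod_lift : \prod_(k < n) (s - (class_size quat_classes (lift ord0 k))%:R) = t ^+ n.
  rewrite (eq_bigr (fun=> t)) => [|k _]; last by rewrite quat_class_size_lift addrK.
  by rewrite prodr_const card_ord.
have sum_lift : \sum_(k < n) ((class_size quat_classes (lift ord0 k))%:R /
                  (s - (class_size quat_classes (lift ord0 k))%:R)) = n%:R * (2 / t).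
  rewrite (eq_bigr (fun=> 2 / t)) => [|k _]; last by rewrite quat_class_size_lift addrK.
  by rewrite sumr_const card_ord; exact: esym (mulr_natl _ _).
have det_eq := det_multipartite_distmx s_neq0 s_neq_size.
rewrite -nc_distmx_quat [s - 2]addrK !big_ord_recl quat_class_size0 prod_lift sum_lift in det_eq.
rewrite [X in s ^+ X * _]card_quat_vertices in det_eq.
apply: (mulIf (expf_neq0 n.+1 s_neq0)); rewrite det_eq.
have -> : (4 * n - 2 = (3 * n - 3) + n.+1)%N by lia.
have -> : t ^+ n = t ^+ (n - 1) * t by rewrite -exprSr subn1 prednK ?n_gt0.
have -> : (2 * n - 2)%:R = 2 * n%:R - 2 :> algC by rewrite natrB ?natrM //; lia.
have d_neq0 : t + 2 - (2 * n%:R - 2) != 0.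
  by rewrite subr_eq0 -natrM -natrB //; lia.
rewrite exprD /s; field.
by rewrite t_neq0 d_neq0.
Qed.

End GeneralizedQuaternion.

Theorem theorem3p1 (n : nat) (gT : finGroupType) (x y : gT) :
  (2 <= n)%N ->
  (x ^+ (2 * n) = 1)%g ->
  (x ^+ n = y ^+ 2)%g ->
  (y * x = x^-1 * y)%g ->
  #|<<[set x; y]>>%g| = (4 * n)%N ->
  char_poly (nc_distmx <<[set x; y]>>%g) =
    ('X + 2%:P) ^+ (3 * n - 3) * 'X ^+ (n - 1)
    * ('X - (3%:R * (n%:R - 1) + sqrtC (5%:R * n%:R ^+ 2 - 10%:R * n%:R + 9%:R))%:P)
    * ('X - (3%:R * (n%:R - 1) - sqrtC (5%:R * n%:R ^+ 2 - 10%:R * n%:R + 9%:R))%:P)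
    :> {poly algC}.
Proof.
move=> n_ge2 x_order xn_y2 yx card_quat; apply: (@poly_eq_large_nat _ _ _ (2 * n)) => m le_m.
have t_neq0 : m%:R != 0 :> algC by rewrite pnatr_eq0 -lt0n; apply: leq_trans le_m; lia.
have s_neq0 : m%:R + 2 != 0 :> algC by rewrite -natrD pnatr_eq0 addn2.
have s_neq_2n2 : m%:R + 2 != (2 * n - 2)%:R :> algC by rewrite -natrD eqr_nat; lia.
rewrite horner_char_poly.
rewrite (det_nc_distmx_quat n_ge2 x_order xn_y2 yx card_quat t_neq0 s_neq0 s_neq_2n2).
rewrite !hornerM !horner_exp hornerD hornerC !hornerX !hornerXsubC -!mulrA; congr (_ * (_ * _)).
set r := sqrtC _; have r2 : r ^+ 2 = 5%:R * n%:R ^+ 2 - 10%:R * n%:R + 9%:R by exact: sqrtCK.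
have -> : (m%:R - (3%:R * (n%:R - 1) + r)) * (m%:R - (3%:R * (n%:R - 1) - r)) =
          (m%:R - 3%:R * (n%:R - 1)) ^+ 2 - r ^+ 2 :> algC by ring.
by rewrite r2; ring.
Qed.
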